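(* Let $\mathcal{M}=(E,\mathcal{C})$ be a loopless oriented matroid with $E=\{e_1,\dots,e_m\}$ ordered $e_1\prec\cdots\prec e_m$, and let $1\le k\le m$. The map $\psi_k:\mathscr{N}_{k-1}\to\mathscr{N}_k$ is surjective: for every $(N_k,A_k)\in\mathscr{N}_k$ there is $(N_{k-1},A_{k-1})\in\mathscr{N}_{k-1}$ with $\psi_k(N_{k-1},A_{k-1})=(N_k,A_k)$.
   Context: A signed subset of a finite set $E$ is a pair $X=(X^+,X^-)$ of disjoint subsets; support $\underline{X}=X^+\cup X^-$, $-X=(X^-,X^+)$. An oriented matroid $\mathcal{M}=(E,\mathcal{C})$: a collection $\mathcal{C}$ of signed subsets with (C1) empty signed set not in $\mathcal{C}$; (C2) $\mathcal{C}=-\mathcal{C}$; (C3) $\underline{X}\subseteq\underline{Y}$ for $X,Y\in\mathcal{C}$ implies $X=\pm Y$; (C4) for $X,Y\in\mathcal{C}$, $X\neq\pm Y$, $e\in X^+\cap Y^-$ there is $Z\in\mathcal{C}$ with $Z^+\subseteq X^+\cup Y^+-\{e\}$, $Z^-\subseteq X^-\cup Y^--\{e\}$. Underlying matroid $\underline{\mathcal{M}}$: circuits $\underline{X}$, $X\in\mathcal{C}$; loopless means no one-element circuit. Positive circuit: $X^-=\emptyset$; acyclic: no positive circuit. Reorientation ${}_{-A}\mathcal{M}$ ($A\subseteq E$): signed circuits ${}_{-A}X=((X^+-A)\cup(X^-\cap A),(X^--A)\cup(X^+\cap A))$; ${}_{-e}={}_{-\{e\}}$. Deletion $\mathcal{M}\backslash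 X$ on $E-X$: signed circuits $Y\in\mathcal{C}$ with $\underline{Y}\subseteq E-X$. Contraction $\mathcal{M}/X$ on $E-X$: support-minimal nonempty members of $\{(Y^+-X,Y^--X):Y\in\mathcal{C},\underline{Y}-X\ne\emptyset\}$. Broken circuit: circuit of $\underline{\mathcal{M}}$ minus its $\prec$-maximal element; $\mathrm{NBC}(\underline{\mathcal{M}})$: subsets of $E$ containing no broken circuit. $E_k=\{e_1,\dots,e_k\}$; for $N_k\subseteq E_k$, $N_k^c=E_k-N_k$. $\mathscr{N}_k$ is the set of pairs $(N_k,A_k)$ with $N_k\subseteq E_k$, $A_k\subseteq E-E_k$, $N_k\in\mathrm{NBC}(\underline{\mathcal{M}})$, and $\mathcal{M}_k:={}_{-A_k}(\mathcal{M}\backslash N_k^c/N_k)$ acyclic. For $(N_{k-1},A_{k-1})\in\mathscr{N}_{k-1}$ with $\mathcal{M}_{k-1}={}_{-A_{k-1}}(\mathcal{M}\backslash N_{k-1}^c/N_{k-1})$: $\psi_k(N_{k-1},A_{k-1})=(N_{k-1}\cup\{e_k\},A_{k-1})$ if $e_k\notin A_{k-1}$ and ${}_{-e_k}\mathcal{M}_{k-1}$ is acyclic; $=(N_{k-1},A_{k-1})$ if $e_k\notin A_{k-1}$ and ${}_{-e_k}\mathcal{M}_{k-1}$ is not acyclic; $=(N_{k-1},A_{k-1}-\{e_k\})$ if $e_k\in A_{k-1}$. *)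

From mathcomp Require Import all_boot.
Set Implicit Arguments.
Unset Strict Implicit.
Unset Printing Implicit Defensive.

(* Ground set E = {e_1,...,e_m} is modelled as 'I_m, with e_i = the ordinal
   i-1, and the order e_1 < ... < e_m is the natural order of ordinals. *)

(* A signed subset X = (X^+, X^-) of 'I_m. *)
Definition sset (m : nat) := ({set 'I_m} * {set 'I_m})%type.

Section OM.
Variable m : nat.
Implicit Types (X Y Z : sset m) (C : {set sset m}) (A S N : {set 'I_m}).

Definition supp X : {set 'I_m} := X.1 :|: X.2.
Definition sneg X : sset m := (X.2, X.1).

Definition oriented_matroid C : Prop :=
  [/\ (forall X, X \in C -> X.1 :&: X.2 = set0),
      (set0, set0) \notin C,
      (forall X, X \in C -> sneg X \in C),
      (forall X Y, X \in C -> Y \in C -> supp X \subset supp Y ->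
                 X = Y \/ X = sneg Y) &
      (forall X Y e, X \in C -> Y \in C -> X <> Y -> X <> sneg Y ->
                 e \in X.1 :&: Y.2 ->
                 exists2 Z, Z \in C &
                   Z.1 \subset (X.1 :|: Y.1) :\ e /\
                   Z.2 \subset (X.2 :|: Y.2) :\ e)].

Definition loopless C : Prop := forall X, X \in C -> #|supp X| <> 1.

Definition acyclic C : bool := [forall X in C, X.2 != set0].

Definition reor A X : sset m :=
  ((X.1 :\: A) :|: (X.2 :&: A), (X.2 :\: A) :|: (X.1 :&: A)).
Definition reorient A C : {set sset m} := [set reor A X | X in C].

Definition deletion D C : {set sset m} :=
  [set Y in C | supp Y :&: D == set0].

Definition contr_cands S C : {set sset m} :=
  [set ((Y.1 :\: S), (Y.2 :\: S)) | Y in [set Y in C | supp Y :\: S != set0]].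
Definition contraction S C : {set sset m} :=
  [set Z in contr_cands S C |
     [forall W in contr_cands S C, ~~ (supp W \proper supp Z)]].

Definition NBC C N : Prop :=
  forall X x, X \in C -> x \in supp X ->
    (forall y, y \in supp X -> (y <= x)%N) ->
    ~ (supp X :\ x \subset N).

Definition Ek (k : nat) : {set 'I_m} := [set i : 'I_m | (i < k)%N].

(* M_k = _{-A}(M \ N^c / N), with N^c = E_k - N. *)
Definition minorM C k N A : {set sset m} :=
  reorient A (contraction N (deletion (Ek k :\: N) C)).

Definition Nscr C k N A : Prop :=
  [/\ N \subset Ek k, A \subset ~: Ek k, NBC C N & acyclic (minorM C k N A)].

(* psi_k, where e_k is the ordinal j (so k = j+1), applied to
   (N_{k-1}, A_{k-1}). *)
Definition psi C (j : 'I_m) (p : {set 'I_m} * {set 'I_m}) :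
    {set 'I_m} * {set 'I_m} :=
  let: (N, A) := p in
  if j \notin A then
    (if acyclic (reorient [set j] (minorM C j N A)) then (j |: N, A)
     else (N, A))
  else (N, A :\ j).

End OM.

From mathcomp Require Import all_boot.
Set Implicit Arguments. Unset Strict Implicit. Unset Printing Implicit Defensive.

(* Provided N contains no circuit, the minor M\D/N reoriented by A has a positive
   circuit iff some circuit W of M\D has its A-reoriented negative part inside N:
   eliminating against circuits whose support outside N is strictly smaller
   shrinks such a W until its contraction is support-minimal, i.e. a positive
   circuit of the minor.
   If e_k is in N_k, drop it.  Otherwise take (N_k, A_k + e_k) when reorienting
   e_k keeps M_(k-1) acyclic, and (N_k, A_k) when it does not: positive circuits
   of M_(k-1) and of its e_k-reorientation would both contain e_k, with opposite
   signs, and eliminating e_k between them gives a positive circuit of M_k. *)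

Lemma disjoint_setU1r (T : finType) (x : T) (A B : {set T}) :
  [disjoint A & x |: B] = (x \notin A) && [disjoint A & B].
Proof. by rewrite -!setI_eq0 setIUr setU_eq0 setI_eq0 disjoint_sym disjoints1. Qed.

Lemma disjoint_setUl (T : finType) (A B D : {set T}) :
  [disjoint A :|: B & D] = [disjoint A & D] && [disjoint B & D].
Proof. by rewrite -!setI_eq0 setIUl setU_eq0. Qed.

Section SignedSets.
Variable m : nat.
Implicit Types (X : sset m) (A N : {set 'I_m}) (j : 'I_m).

Lemma Ek_succ j : Ek m j.+1 = j |: Ek m j.
Proof. by apply/setP => x; rewrite !inE ltnS leq_eqVlt. Qed.

Lemma notin_Ek j : j \notin Ek m j.
Proof. by rewrite inE ltnn. Qed.

Lemma supp_sneg X : supp (sneg X) = supp X.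
Proof. by rewrite /supp setUC. Qed.

Lemma reor_sneg A X : reor A (sneg X) = sneg (reor A X).
Proof. by []. Qed.

Lemma supp_reor A X : supp (reor A X) = supp X.
Proof.
apply/setP => x; rewrite !inE.
by case: (x \in X.1); case: (x \in X.2); case: (x \in A).
Qed.

Lemma mem_reor1 A N X x :
  (reor A X).2 \subset N -> x \in supp X -> x \notin N -> x \in (reor A X).1.
Proof.
move=> XN; rewrite -(supp_reor A) in_setU => /orP [//|xX] xN.
by rewrite (subsetP XN x xX) in xN.
Qed.

Lemma reorient_setU1 j A (S : {set sset m}) : j \notin A ->
  reorient [set j] (reorient A S) = reorient (j |: A) S.
Proof.
move=> jA; rewrite /reorient -imset_comp; apply: eq_imset => X /=.
congr pair; apply/setP => x; rewrite !inE;
  case: (eqVneq x j) => [->|_]; rewrite ?(negbTE jA) /=;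
  by case: (_ \in X.1); case: (_ \in X.2); try case: (x \in A).
Qed.

Lemma reor_setU1_2 j A N X :
  (reor (j |: A) X).2 \subset N -> (reor A X).2 \subset j |: N.
Proof.
move/subsetP=> XN; apply/subsetP => x xX; rewrite in_setU1.
have [//|xj] := eqVneq x j; apply: XN; move: xX.
by rewrite !inE (negbTE xj).
Qed.

Lemma mem_reor_setU1_1 j A X : j \notin A ->
  (j \in (reor (j |: A) X).1) = (j \in (reor A X).2).
Proof.
move=> jA; rewrite !inE eqxx (negbTE jA) /=.
by case: (j \in X.1); case: (j \in X.2).
Qed.

Lemma acyclicPn (S : {set sset m}) :
  reflect (exists2 X, X \in S & X.2 = set0) (~~ acyclic S).
Proof.
apply: (iffP forallPn) => [[X]|[X SX X2]]; last by exists X; rewrite SX X2 eqxx.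
by rewrite negb_imply negbK => /andP [SX /eqP X2]; exists X.
Qed.

Definition scontract N X : sset m := (X.1 :\: N, X.2 :\: N).

Lemma supp_scontract N X : supp (scontract N X) = supp X :\: N.
Proof. by rewrite /supp setDUl. Qed.

Lemma reor_scontract A N X : reor A (scontract N X) = scontract N (reor A X).
Proof.
congr pair; apply/setP => x; rewrite !inE;
  by case: (x \in X.1); case: (x \in X.2); case: (x \in A); case: (x \in N).
Qed.

End SignedSets.

Section Minors.
Variables (m : nat) (C : {set sset m}).
Hypothesis omC : oriented_matroid C.
Implicit Types (X Y Z W : sset m) (A D N : {set 'I_m}) (j : 'I_m).

Lemma reor_elimination A X Y e : X \in C -> Y \in C -> X <> Y -> X <> sneg Y ->
  e \in (reor A X).1 -> e \in (reor A Y).2 ->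
  exists2 Z, Z \in C & (reor A Z).2 \subset ((reor A X).2 :|: (reor A Y).2) :\ e /\
                      supp Z \subset (supp X :|: supp Y) :\ e.
Proof.
case: omC => _ _ _ _ C4 CX CY XY XnY eX eY.
suff [Z CZ [Z1 Z2]] : exists2 Z, Z \in C &
    Z.1 \subset (X.1 :|: Y.1) :\ e /\ Z.2 \subset (X.2 :|: Y.2) :\ e.
  exists Z => //; split; apply/subsetP => x;
    move: (subsetP Z1 x) (subsetP Z2 x); rewrite !inE;
    case: (x \in Z.1); case: (x \in Z.2); case: (x == e); case: (x \in A);
    case: (x \in X.1); case: (x \in X.2); case: (x \in Y.1); case: (x \in Y.2);
    by intuition.
case/boolP: (e \in A) => eA.
- have eXY : e \in Y.1 :&: X.2.
    by move: eX eY; rewrite !inE eA /= => /andP [-> _] /andP [-> _].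
  have YnX : Y <> sneg X by move=> YX; apply: XnY; rewrite YX; case: (X).
  have [Z CZ [Z1 Z2]] := C4 Y X e CY CX (nesym XY) YnX eXY.
  by exists Z => //; rewrite setUC [X.2 :|: _]setUC.
- have eXY : e \in X.1 :&: Y.2.
    move: eX eY; rewrite !inE (negbTE eA) /=.
    by move=> /orP [-> | /andP [_ //]] /orP [-> | /andP [_ //]].
  exact: C4 X Y e CX CY XY XnY eXY.
Qed.

Lemma supp_circuit_neq0 X : X \in C -> supp X != set0.
Proof.
case: omC => _ C1 _ _ _; case: X => X1 X2 CX; apply: contraNneq C1 => /eqP.
by rewrite setU_eq0 => /andP [/eqP /= X10 /eqP /= X20]; move: CX; rewrite X10 X20.
Qed.

Lemma NBC_no_circuit N X : NBC C N -> X \in C -> ~~ (supp X \subset N).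
Proof.
move=> NBC_N CX; apply/negP => XN.
have [x0 Xx0] := set0Pn _ (supp_circuit_neq0 CX).
have [x Xx xmax] := @arg_maxnP _ x0 (mem (supp X)) val Xx0.
by apply: (NBC_N X x CX Xx xmax); rewrite subDset subsetU ?XN ?orbT.
Qed.

Lemma NBC_subset N N' : N' \subset N -> NBC C N -> NBC C N'.
Proof.
by move=> N'N NBC_N X x CX Xx xmax /subset_trans /(_ N'N); apply: NBC_N.
Qed.

Lemma NBC_setU1_no_circuit j N X :
  NBC C N -> N \subset Ek m j -> X \in C -> ~~ (supp X \subset j |: N).
Proof.
move=> NBC_N NEk CX; apply/negP => XjN.
have [Xj|Xj] := boolP (j \in supp X); last first.
  apply: (negP (NBC_no_circuit NBC_N CX)); apply/subsetP => x Xx.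
  by move: (subsetP XjN x Xx); rewrite !inE => /predU1P [xj|//]; rewrite -xj Xx in Xj.
apply: (NBC_N X j CX Xj).
  move=> y /(subsetP XjN); rewrite !inE => /predU1P [-> //|/(subsetP NEk)].
  by rewrite inE => /ltnW.
by rewrite subDset.
Qed.

Definition positive_in_minor D N A W : bool :=
  [&& W \in C, [disjoint supp W & D] & (reor A W).2 \subset N].

Lemma positive_in_minor_of_cyclic D N A :
  ~~ acyclic (reorient A (contraction N (deletion D C))) ->
  exists W, positive_in_minor D N A W.
Proof.
case/acyclicPn => _ /imsetP [_ /setIdP [/imsetP [W /setIdP [/setIdP [CW WD] _] ->] _] ->].
move=> WN; exists W; rewrite /positive_in_minor CW -setI_eq0 WD -setD_eq0.
by move: WN; rewrite -/(scontract N W) reor_scontract /= => ->.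
Qed.

Section PositiveInMinor.
Variables D N A : {set 'I_m}.
Hypothesis noN : forall X, X \in C -> ~~ (supp X \subset N).

Lemma smaller_positive_in_minor W Y :
  positive_in_minor D N A W -> Y \in C -> [disjoint supp Y & D] ->
  supp Y :\: N \proper supp W :\: N ->
  exists2 W', positive_in_minor D N A W' & #|supp W' :\: N| < #|supp W :\: N|.
Proof.
move=> /and3P [CW WD WN] CY YD YW.
pose P V := [&& V \in C, [disjoint supp V & D] & supp V :\: N \proper supp W :\: N].
have PY : P Y by apply/and3P.
have [V /and3P [CV VD VW] Vmin] := arg_minnP (fun V => #|(reor A V).2 :\: N|) PY.
have [VN|/subsetPn [e eV eN]] := boolP ((reor A V).2 \subset N).
  by exists V; [apply/and3P | apply: proper_card].
have eWN : e \in supp W :\: N.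
  by apply: (subsetP (proper_sub VW)); rewrite inE eN -(supp_reor A) in_setU eV orbT.
have eW : e \in (reor A W).1 by apply: mem_reor1 WN _ eN; move: eWN; rewrite inE => /andP [].
have WV : W <> V by move=> eWV; rewrite eWV properxx in VW.
have WnV : W <> sneg V by move=> eWV; rewrite eWV supp_sneg properxx in VW.
have [Z CZ [ZA ZS]] := reor_elimination CW CV WV WnV eW eV.
have ZWV : supp Z \subset supp W :|: supp V := subset_trans ZS (subD1set _ _).
have PZ : P Z.
  apply/and3P; split => //.
    by apply: disjointWl ZWV _; rewrite disjoint_setUl WD VD.
  apply: sub_proper_trans (properD1 eWN); apply/subsetP => x /setDP [Zx xN].
  move: (subsetP ZS x Zx); rewrite in_setD1 in_setU => /andP [xe /orP [Wx|Vx]].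
    by rewrite in_setD1 in_setD xe xN Wx.
  by rewrite in_setD1 xe (subsetP (proper_sub VW)) // in_setD xN Vx.
have eVN : e \in (reor A V).2 :\: N by rewrite in_setD eN eV.
exfalso; move: (Vmin Z PZ); rewrite leqNgt => /negP; apply; apply: proper_card.
apply: sub_proper_trans (properD1 eVN); apply/subsetP => x /setDP [Zx xN].
move: (subsetP ZA x Zx); rewrite in_setD1 in_setU => /andP [xe /orP [Wx|Vx]].
  by rewrite (subsetP WN x Wx) in xN.
by rewrite in_setD1 in_setD xe xN Vx.
Qed.

Lemma cyclic_of_positive_in_minor W0 :
  positive_in_minor D N A W0 -> ~~ acyclic (reorient A (contraction N (deletion D C))).
Proof.
move=> PW0; have [W PW Wmin] := arg_minnP (fun W => #|supp W :\: N|) PW0.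
have /and3P [CW WD WN] := PW.
have Wcand : scontract N W \in contr_cands N (deletion D C).
  by apply: imset_f; rewrite !inE CW setI_eq0 WD setD_eq0 noN.
have Wcontr : scontract N W \in contraction N (deletion D C).
  rewrite inE Wcand; apply/forallP => W'; apply/implyP => /imsetP [Y].
  rewrite !inE => /andP [/andP [CY YD] _] ->; apply/negP; rewrite !supp_scontract => YW.
  rewrite setI_eq0 in YD; have [V PV ltV] := smaller_positive_in_minor PW CY YD YW.
  by have := Wmin V PV; rewrite leqNgt ltV.
apply/acyclicPn; exists (reor A (scontract N W)); first exact: imset_f.
by rewrite reor_scontract; apply/eqP; rewrite setD_eq0.
Qed.

End PositiveInMinor.

Lemma acyclic_minorP D N A : (forall X, X \in C -> ~~ (supp X \subset N)) ->
  reflect (forall W, ~~ positive_in_minor D N A W)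
          (acyclic (reorient A (contraction N (deletion D C)))).
Proof.
move=> noN; apply: (iffP idP) => [acyc W|noW].
  by apply: contraL acyc; apply: cyclic_of_positive_in_minor.
by apply/negP => /negP /positive_in_minor_of_cyclic [W]; apply/negP/noW.
Qed.

End Minors.

Section PsiSurjective.
Variables (m : nat) (C : {set sset m}) (j : 'I_m) (N A : {set 'I_m}).
Hypotheses (omC : oriented_matroid C) (NA : Nscr C j.+1 N A).

Let noN X : X \in C -> ~~ (supp X \subset N).
Proof. by case: NA => _ _ NBC_N _; apply: NBC_no_circuit. Qed.

Let no_positive W : ~~ positive_in_minor C (Ek m j.+1 :\: N) N A W.
Proof. by case: NA => _ _ _; move/(acyclic_minorP omC _ _ noN). Qed.

Let A_sub : A \subset ~: Ek m j.
Proof.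
case: NA => _ AEk _ _; apply: subset_trans AEk _.
by rewrite setCS Ek_succ subsetU1.
Qed.

Let jA : j \notin A.
Proof. by case: NA => _ AEk _ _; apply/negP => /(subsetP AEk); rewrite !inE ltnS leqnn. Qed.

Lemma psi_preimage_mem : j \in N ->
  Nscr C j (N :\ j) A /\ psi C j (N :\ j, A) = (N, A).
Proof.
move=> jN; case: NA => NEk _ NBC_N _.
have ED : Ek m j :\: (N :\ j) = Ek m j.+1 :\: N.
  by apply/setP => x; rewrite Ek_succ !inE; case: eqVneq => [->|_]; rewrite ?jN ?ltnn ?andbF.
have noNj X : X \in C -> ~~ (supp X \subset N :\ j).
  by move=> CX; apply: contra (noN CX) => /subset_trans; apply; apply: subD1set.
have acyc B : (forall W, (reor B W).2 \subset N :\ j -> (reor A W).2 \subset N) ->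
    acyclic (reorient B (contraction (N :\ j) (deletion (Ek m j :\: (N :\ j)) C))).
  move=> BA; apply/(acyclic_minorP omC _ _ noNj) => W; apply: contra (no_positive W).
  by rewrite -ED => /and3P [CW WD WN]; apply/and3P; split => //; apply: BA.
split; first split => //.
- apply/subsetP => x /setD1P [xj xN]; move: (subsetP NEk x xN).
  by rewrite Ek_succ in_setU1 (negbTE xj).
- exact: NBC_subset (subD1set N j) NBC_N.
- by apply: acyc => W /subset_trans; apply; apply: subD1set.
rewrite /psi (negbTE jA) /minorM reorient_setU1 // acyc ?setD1K // => W.
by move/reor_setU1_2; rewrite setD1K.
Qed.

Section NotInN.
Hypothesis jN : j \notin N.

Let NEk : N \subset Ek m j.
Proof.
case: NA => NEk _ _ _; apply/subsetP => x xN; move: (subsetP NEk x xN).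
by rewrite Ek_succ in_setU1 => /predU1P [xj|//]; move: jN; rewrite -xj xN.
Qed.

Lemma psi_preimage_reoriented : acyclic (reorient [set j] (minorM C j N A)) ->
  Nscr C j N (j |: A) /\ psi C j (N, j |: A) = (N, A).
Proof.
case: NA => _ _ NBC_N _ acyc; split.
  split=> //; last by rewrite /minorM -reorient_setU1.
  by rewrite subUset sub1set inE notin_Ek A_sub.
by rewrite /psi setU11 /= setU1K.
Qed.

Lemma psi_preimage_fixed : ~~ acyclic (reorient [set j] (minorM C j N A)) ->
  Nscr C j N A /\ psi C j (N, A) = (N, A).
Proof.
move=> cyc; split; last by rewrite /psi (negbTE jA) (negbTE cyc).
case: NA => _ _ NBC_N _; split=> //.
have Dk : Ek m j.+1 :\: N = j |: (Ek m j :\: N).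
  by rewrite Ek_succ setDUl (setDidPl _) ?disjoints1.
have jW W : W \in C -> [disjoint supp W & Ek m j :\: N] ->
    (reor A W).2 \subset j |: N -> j \in supp W.
  move=> CW WD WN; apply: contraR (no_positive W) => jW.
  rewrite /positive_in_minor CW Dk disjoint_setU1r jW WD /=.
  apply/subsetP => x xW; move: (subsetP WN x xW); rewrite in_setU1 => /predU1P [xj|//].
  by move: jW; rewrite -xj -(supp_reor A) in_setU xW orbT.
apply/(acyclic_minorP omC _ _ noN) => W1; apply/negP => /and3P [CW1 W1D W1N].
move: cyc; rewrite /minorM reorient_setU1 // => /positive_in_minor_of_cyclic.
case=> W2 /and3P [CW2 W2D W2jN]; have W2N := reor_setU1_2 W2jN.
have jW1 : j \in (reor A W1).1.
  apply: (mem_reor1 W1N _ jN); apply: jW => //.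
  exact: subset_trans W1N (subsetU1 _ _).
have jW2 : j \in (reor A W2).2.
  by rewrite -mem_reor_setU1_1 //; apply: (mem_reor1 W2jN _ jN); apply: jW.
have W12 : W1 <> W2 by move=> eW; move: jN; rewrite (subsetP W1N) // eW.
have W1n2 : W1 <> sneg W2.
  move=> eW; apply: (negP (NBC_setU1_no_circuit omC NBC_N NEk CW1)).
  rewrite -(supp_reor A) /supp subUset {1}eW reor_sneg W2N /=.
  exact: subset_trans W1N (subsetU1 _ _).
have [Z CZ [ZA /subsetD1P [ZW jZ]]] := reor_elimination omC CW1 CW2 W12 W1n2 jW1 jW2.
apply: (negP (no_positive Z)); rewrite /positive_in_minor CZ Dk disjoint_setU1r jZ.
rewrite (disjointWl ZW) ?(disjoint_setUl (supp W1)) ?W1D ?W2D //=.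
apply/subsetP => x /(subsetP ZA); rewrite in_setD1 in_setU => /andP [xj].
by case/orP => [/(subsetP W1N) //|/(subsetP W2N)]; rewrite in_setU1 (negbTE xj).
Qed.

End NotInN.
End PsiSurjective.

Theorem lemma2p5 (m : nat) (C : {set sset m}) (j : 'I_m) :
  oriented_matroid C -> loopless C ->
  forall N A : {set 'I_m}, Nscr C j.+1 N A ->
  exists N' A' : {set 'I_m},
    Nscr C j N' A' /\ psi C j (N', A') = (N, A).
Proof.
move=> omC _ N A NA.
have [jN|jN] := boolP (j \in N).
  by exists (N :\ j), A; apply: psi_preimage_mem.
have [acyc|cyc] := boolP (acyclic (reorient [set j] (minorM C j N A))).
  by exists N, (j |: A); apply: psi_preimage_reoriented.
by exists N, A; apply: psi_preimage_fixed.
Qed.
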